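(* Let $\delta_\ell=94/194$. Let $G=(V,E)$ be an $(n-4)$-regular graph on $n>4$ nodes in which every clique has at most $\delta_\ell n$ nodes. Let $V_i\subseteq V$ with $|V_i|=(\frac12+\delta)n$ for some $0<\delta<\frac12$, and let $\widehat{\alpha}\,n$ be the number of nodes of a largest clique in the subgraph induced by $V\setminus V_i$. Then $$n(n-4)\,\mathsf M(V_i)\le\Big(4\delta^2-\delta-\tfrac12+2\widehat\alpha\Big)n\le\Big(2\delta_\ell-\tfrac12\Big)n.$$
   Context: For a finite simple undirected graph $G=(V,E)$ with $m=|E|\ge1$ edges, degrees $d_v$, and $a_{u,v}=1$ if $\{u,v\}\in E$ and $0$ otherwise: for $C\subseteq V$, $\mathsf M(C)=\frac{1}{2m}\sum_{u\in C}\sum_{v\in C}\big(a_{u,v}-\frac{d_ud_v}{2m}\big)$, the sum over all ordered pairs including $u=v$. *)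

From HB Require Import structures.
From mathcomp Require Import all_boot all_order all_algebra.
Set Implicit Arguments. Unset Strict Implicit. Unset Printing Implicit Defensive.
Import Order.TTheory GRing.Theory Num.Theory.

Definition simple_graph (T : finType) (e : rel T) : Prop :=
  symmetric e /\ irreflexive e.

Definition deg (T : finType) (e : rel T) (v : T) : nat := #|[set u | e v u]|.

Definition regular (T : finType) (e : rel T) (k : nat) : Prop :=
  forall v, deg e v = k.

Definition edges (T : finType) (e : rel T) : {set {set T}} :=
  [set S : {set T} | [exists u, exists v, e u v && (S == [set u; v])]].

Definition nedges (T : finType) (e : rel T) : nat := #|edges e|.

Definition clique (T : finType) (e : rel T) (C : {set T}) : bool :=
  [forall u in C, forall v in C, (u != v) ==> e u v].

(* number of nodes of a largest clique of the subgraph induced by A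
   (cliques of G[A] are exactly cliques of G contained in A) *)
Definition max_clique_in (T : finType) (e : rel T) (A : {set T}) : nat :=
  \max_(C : {set T} | clique e C && (C \subset A)) #|C|.

Local Open Scope ring_scope.

Definition modularity (R : realFieldType) (T : finType) (e : rel T)
    (C : {set T}) : R :=
  (1 / (2 * (nedges e)%:R)) *
  \sum_(u in C) \sum_(v in C)
     ((e u v)%:R - ((deg e u)%:R * (deg e v)%:R) / (2 * (nedges e)%:R)).

Definition delta_l (R : realFieldType) : R := 94%:R / 194%:R.

(* Counting ordered adjacent pairs, (n-4)-regularity gives
   e(V_i) = (k - c)(n - 4) + e(V \ V_i) with k = |V_i| and c = n - k.
   A set of c vertices whose largest clique has w vertices contains at least
   2(c - w) ordered non-adjacent pairs, so e(V \ V_i) <= c^2 - 3c + 2w.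
   Since n(n-4) M(V_i) = e(V_i) - k^2 (n-4)/n, substituting k = (1/2 + delta) n
   and w = ahat n yields the first bound with equality in the algebra.  For the
   second, ahat <= delta_l and ahat <= 1/2 - delta; then 4 delta^2 - delta <= 0
   when delta <= 1/4, and 4 delta^2 - 3 delta + 1 <= 1/2 on [1/4, 1/2]. *)

From HB Require Import structures.
From mathcomp Require Import all_boot all_order all_algebra.
From mathcomp Require Import ring lra zify.
Import Order.TTheory GRing.Theory Num.Theory.
Set Implicit Arguments. Unset Strict Implicit. Unset Printing Implicit Defensive.

Section Counting.
Variables (T : finType) (e : rel T).

Definition adj_count (A B : {set T}) : nat := \sum_(u in A) \sum_(v in B) e u v.

Definition nonadj_count (A : {set T}) : nat :=
  \sum_(u in A) \sum_(v in A) ((u != v) && ~~ e u v).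

Lemma deg_sum v : deg e v = \sum_u e v u.
Proof. by rewrite /deg -sum1_card big_mkcond; apply: eq_bigr => u _; rewrite inE. Qed.

Lemma sum_deg_split (A B : {set T}) :
  \sum_(u in A) deg e u = adj_count A B + adj_count A (~: B).
Proof.
rewrite -big_split; apply: eq_bigr => u _.
by rewrite deg_sum (bigID (mem B)) /=; congr (_ + _); apply: eq_bigl => v; rewrite inE.
Qed.

Lemma card_le_max_clique_in (A C : {set T}) :
  clique e C -> C \subset A -> #|C| <= max_clique_in e A.
Proof. by move=> cC sCA; apply: leq_bigmax_cond; rewrite cC. Qed.

Lemma max_clique_in_le_card (A : {set T}) : max_clique_in e A <= #|A|.
Proof. by apply/bigmax_leqP => C /andP[_]; apply: subset_leq_card. Qed.

Lemma max_clique_inS (A B : {set T}) :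
  A \subset B -> max_clique_in e A <= max_clique_in e B.
Proof.
move=> sAB; apply/bigmax_leqP => C /andP[cC sCA].
exact: card_le_max_clique_in cC (subset_trans sCA sAB).
Qed.

Lemma max_clique_in_attained (A : {set T}) :
  exists2 C : {set T}, clique e C & max_clique_in e A = #|C|.
Proof.
have clique0 : clique e set0 && (set0 \subset A).
  by rewrite sub0set andbT; apply/forallP => u; rewrite in_set0.
rewrite /max_clique_in (bigop.bigmax_eq_arg set0 clique0).
by case: arg_maxnP => // C /andP[cC _] _; exists C.
Qed.

Hypothesis e_sym : symmetric e.
Hypothesis e_irr : irreflexive e.

Lemma adj_countC (A B : {set T}) : adj_count A B = adj_count B A.
Proof.
rewrite /adj_count exchange_big.
by apply: eq_bigr => u _; apply: eq_bigr => v _; rewrite e_sym.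
Qed.

Lemma adj_nonadj_count (A : {set T}) :
  adj_count A A + nonadj_count A + #|A| = #|A| * #|A|.
Proof.
have diagE : #|A| = \sum_(u in A) \sum_(v in A) (v == u).
  rewrite -sum1_card; apply: eq_bigr => u Au.
  by rewrite (bigD1 u) //= big1 ?eqxx // => v /andP[_ /negbTE ->].
have squareE : #|A| * #|A| = \sum_(u in A) \sum_(v in A) 1.
  by rewrite sum1_card sum_nat_const.
rewrite squareE {1}diagE /adj_count /nonadj_count -!big_split; apply: eq_bigr => u _.
rewrite -!big_split; apply: eq_bigr => v _ /=.
by case: (eqVneq u v) => [->|]; rewrite ?e_irr //=; case: (e u v).
Qed.

Lemma nonadj_count_setD1 (A : {set T}) u v :
  u \in A -> v \in A -> u != v -> ~~ e u v ->
  (nonadj_count (A :\ u)).+2 <= nonadj_count A.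
Proof.
move=> Au Av nuv nEuv; have Avu : v \in A :\ u by rewrite !inE eq_sym nuv.
pose g x y : nat := (x != y) && ~~ e x y.
have guv : g u v = 1 by rewrite /g nuv nEuv.
have gvu : g v u = 1 by rewrite /g eq_sym nuv e_sym nEuv.
have splitA : nonadj_count A =
    \sum_(x in A) g x u + \sum_(x in A) \sum_(y in A :\ u) g x y.
  by rewrite -big_split; apply: eq_bigr => x _; rewrite (big_setD1 u Au).
have fromv : g v u <= \sum_(x in A) g x u by rewrite (big_setD1 v Av) leq_addr.
have fromu :
    g u v + nonadj_count (A :\ u) <= \sum_(x in A) \sum_(y in A :\ u) g x y.
  by rewrite (big_setD1 u Au) leq_add // (big_setD1 v Avu) leq_addr.
by rewrite splitA; move: fromv fromu; rewrite guv gvu; lia.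
Qed.

(* A non-clique has a non-adjacent pair u, v; deleting u loses both ordered
   pairs (u, v) and (v, u), which pays for the induction step. *)
Lemma card_le_max_clique_nonadj (A : {set T}) :
  #|A|.*2 <= (max_clique_in e A).*2 + nonadj_count A.
Proof.
elim: {A}_.+1 {-2}A (ltnSn #|A|) => // m IH A leAm.
have [cA | ncA] := boolP (clique e A).
  by rewrite (leq_trans _ (leq_addr _ _)) // leq_double card_le_max_clique_in.
have [u Au [v Av /andP[nuv nEuv]]] :
    exists2 u, u \in A & exists2 v, v \in A & (u != v) && ~~ e u v.
  move: ncA => /forallPn[u]; rewrite negb_imply => /andP[Au /forallPn[v]].
  rewrite negb_imply => /andP[Av]; rewrite negb_imply => nEuv.
  by exists u => //; exists v.
have cardA : #|A| = #|A :\ u|.+1 by rewrite (cardsD1 u) Au.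
have := IH (A :\ u); rewrite -ltnS -cardA => /(_ leAm).
have := max_clique_inS (subD1set A u).
have := nonadj_count_setD1 Au Av nuv nEuv.
rewrite cardA !doubleS; lia.
Qed.

Lemma arcs_of_edge u v : e u v ->
  [set p : T * T | e p.1 p.2 && ([set p.1; p.2] == [set u; v])] =
  [set (u, v); (v, u)].
Proof.
move=> Euv; apply/setP => -[a b]; rewrite !inE /= !xpair_eqE.
apply/idP/idP => [/andP[Eab /eqP abE] | /orP[] /andP[/eqP-> /eqP->]].
- have nab : a != b by apply: contraTneq Eab => ->; rewrite e_irr.
  have : a \in [set u; v] by rewrite -abE set21.
  have : b \in [set u; v] by rewrite -abE set22.
  rewrite !inE => /orP[] /eqP hb /orP[] /eqP ha; subst a b;
    by move: nab; rewrite !eqxx ?orbT.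
- by rewrite Euv eqxx.
- by rewrite e_sym Euv setUC eqxx.
Qed.

Lemma sum_deg : \sum_u deg e u = (nedges e).*2.
Proof.
have -> : \sum_u deg e u = #|[set p : T * T | e p.1 p.2]|.
  rewrite -sum1_card [RHS]big_mkcond (eq_bigr _ (fun u _ => deg_sum u)) pair_big /=.
  by apply: eq_bigr => -[u v] _; rewrite inE; case: (e u v).
rewrite -sum1_card.
rewrite (partition_big (fun p : T * T => [set p.1; p.2]) (mem (edges e))) /=; last first.
  move=> [u v]; rewrite inE /= => Euv; rewrite inE.
  by apply/existsP; exists u; apply/existsP; exists v; rewrite Euv eqxx.
rewrite -mul2n /nedges -sum1_card big_distrr /=; apply: eq_bigr => S.
rewrite inE => /existsP[u /existsP[v /andP[Euv /eqP->]]].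
have nuv : u != v by apply: contraTneq Euv => ->; rewrite e_irr.
have -> : 2 * 1 = #|[set (u, v); (v, u)]| by rewrite cards2 xpair_eqE negb_and nuv.
by rewrite -(arcs_of_edge Euv) -sum1_card; apply: eq_bigl => p; rewrite !inE.
Qed.

Lemma adj_count_le_max_clique (A : {set T}) :
  adj_count A A + 3 * #|A| <= #|A| * #|A| + (max_clique_in e A).*2.
Proof. by have := adj_nonadj_count A; have := card_le_max_clique_nonadj A; lia. Qed.

Lemma regular_adj_count_bound N (A : {set T}) : regular e N ->
  adj_count A A + #|~: A| * N + 3 * #|~: A| <=
    #|A| * N + #|~: A| * #|~: A| + (max_clique_in e (~: A)).*2.
Proof.
move=> regN; have degA := sum_deg_split A A; have degC := sum_deg_split (~: A) A.
rewrite !(eq_bigr _ (fun u _ => regN u)) !sum_nat_const in degA degC.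
rewrite [adj_count (~: A) A]adj_countC in degC.
by have := adj_count_le_max_clique (~: A); lia.
Qed.

Local Open Scope ring_scope.

Lemma modularity_regular (R : realFieldType) N (A : {set T}) :
  regular e N -> (0 < N)%N -> (0 < #|T|)%N ->
  #|T|%:R * N%:R * modularity R e A =
    (adj_count A A)%:R - #|A|%:R ^+ 2 * N%:R / #|T|%:R :> R.
Proof.
move=> regN N_gt0 T_gt0.
have m2E : 2 * (nedges e)%:R = #|T|%:R * N%:R :> R.
  by rewrite -!natrM mul2n -sum_deg (eq_bigr _ (fun u _ => regN u)) sum_nat_const.
have sumE : \sum_(u in A) \sum_(v in A)
      ((e u v)%:R - (deg e u)%:R * (deg e v)%:R / (#|T|%:R * N%:R)) =
    (adj_count A A)%:R - (#|A| * #|A|)%:R * (N%:R * N%:R / (#|T|%:R * N%:R)) :> R.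
  set c := (N%:R * N%:R / _).
  rewrite (eq_bigr (fun u => \sum_(v in A) (e u v)%:R - c *+ #|A|)); last first.
    move=> u _; rewrite sumrB [X in _ - X](eq_bigr (fun _ => c)) ?sumr_const //.
    by move=> v _; rewrite !regN.
  rewrite sumrB sumr_const -mulrnA /adj_count natr_sum -[c *+ _]mulr_natl.
  by congr (_ - _); apply: eq_bigr => u _; rewrite natr_sum.
rewrite /modularity m2E sumE natrM; field.
by rewrite !pnatr_eq0 -!lt0n N_gt0 T_gt0.
Qed.

End Counting.

Local Open Scope ring_scope.

Lemma quadratic_bound (R : realFieldType) (d a b : R) :
  0 <= d <= 1 / 2 -> a <= b -> a <= 1 / 2 - d -> 1 / 4 <= b ->
  4 * d ^+ 2 - d - 1 / 2 + 2 * a <= 2 * b - 1 / 2.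
Proof. by move=> /andP[d_ge0 d_le] *; nra. Qed.

Lemma delta_l_ge_quarter (R : realFieldType) : 1 / 4 <= delta_l R.
Proof.
rewrite /delta_l ler_pdivlMr ?ltr0n // mulrAC ler_pdivrMr ?ltr0n //.
by rewrite mul1r -natrM ler_nat.
Qed.

Theorem lemma7 (R : realFieldType) (T : finType) (e : rel T)
  (Hsimple : simple_graph e)
  (Hn : (4 < #|T|)%N)
  (Hreg : regular e (#|T| - 4))
  (Hclq : forall C : {set T}, clique e C -> (#|C|%:R : R) <= delta_l R * #|T|%:R)
  (Vi : {set T}) (delta : R)
  (Hd0 : 0 < delta) (Hd1 : delta < 1 / 2)
  (HVi : (#|Vi|%:R : R) = (1 / 2 + delta) * #|T|%:R)
  (ahat : R)
  (Hahat : ahat * #|T|%:R = (max_clique_in e (~: Vi))%:R) :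
  let n : R := #|T|%:R in
  n * (n - 4) * modularity R e Vi
    <= (4 * delta ^+ 2 - delta - 1 / 2 + 2 * ahat) * n
  /\ (4 * delta ^+ 2 - delta - 1 / 2 + 2 * ahat) * n
    <= (2 * delta_l R - 1 / 2) * n.
Proof.
move=> n; case: Hsimple => e_sym e_irr.
have T_gt0 : (0 < #|T|)%N by apply: ltn_trans Hn.
have n_gt0 : 0 < n by rewrite ltr0n.
have NE : (#|T| - 4)%:R = n - 4 :> R by rewrite natrB // ltnW.
have cardCE : #|~: Vi|%:R = (1 / 2 - delta) * n :> R.
  have := cardsC Vi; move/(congr1 (fun k => k%:R : R)); rewrite natrD HVi => cardE.
  by apply: (addrI ((1 / 2 + delta) * n)); rewrite cardE; field.
split.
- rewrite -NE modularity_regular ?subn_gt0 //.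
  have := regular_adj_count_bound e_sym e_irr Vi Hreg.
  rewrite -(ler_nat R) -!addnn !natrD !natrM HVi cardCE NE -Hahat.
  have divE : ((1 / 2 + delta) * n) ^+ 2 * (n - 4) / n =
               (1 / 2 + delta) ^+ 2 * n * (n - 4).
    by field; rewrite lt0r_neq0.
  rewrite -/n divE => bound; nra.
- rewrite ler_pM2r //; apply: quadratic_bound; last exact: delta_l_ge_quarter.
  + by rewrite !ltW.
  + have [C cC maxC] := max_clique_in_attained e (~: Vi).
    by rewrite -(ler_pM2r n_gt0) Hahat maxC; apply: Hclq.
  + rewrite -(ler_pM2r n_gt0) Hahat -cardCE ler_nat.
    exact: max_clique_in_le_card.
Qed.
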